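(* Let $R$ be a subring of $\mathbb{Q}$, let $\Phi$ be a set of finite-rank-free-by-1 $R$-modules, and let $G$ be a torsion-free $R$-module with nucleus $R$ which is both $\Phi$-complete and $\Phi$-represented. Then $G$ is a splitter, i.e. $\mathrm{Ext}(G,G)=0$.
   Context: For a torsion-free group $X\neq0$, $\mathrm{nuc}\,X$ is the largest subring of $\mathbb{Q}$ over which $X$ is a module. Let $n\le\omega$. Let $B$ be the free $R$-module with basis $\{x_i:i<n\}\cup\{y_m:m\in\omega\}$, let $p_m\in R\setminus\{0\}$ and $k_{im}\in R$ with, for each $m$, $k_{im}=0$ for all but finitely many $i$, and let $N$ be the submodule generated by $y_{m+1}p_m-y_m-\sum_{i<n}x_ik_{im}$ $(m\in\omega)$. An $R$-module $G'$ is $n$-free-by-1 if $G'\cong B/N$ for such data, $G'$ is not free, and, if $n$ is finite, every $R$-submodule of $G'$ of rank $\le n$ is free; it is finite-rank-free-by-1 if it is $n$-free-by-1 for some finite $n$. $G$ is $\Phi$-complete if $\mathrm{Ext}(G',G)=0$ for all $G'\in\Phi$. $G$ is $\Phi$-represented if $G=\bigcup_{\alpha<\lambda}G_\alpha$ for an ascending continuous chain of $R$-submodules with $G_0=0$ and each $G_{\alpha+1}/G_\alpha$ isomorphic to a member of $\Phi$ or to a free $R$-module. *)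

(* Subrings of Q are predicates on [rat]; R-modules are
   abelian groups (zmodType) with an explicit scalar action of the elements
   of R (the action outside R is irrelevant). *)
From HB Require Import structures.
From mathcomp Require Import all_boot all_order all_algebra.
Set Implicit Arguments. Unset Strict Implicit. Unset Printing Implicit Defensive.
Import Order.TTheory GRing.Theory Num.Theory.
Local Open Scope ring_scope.

Definition is_rmod (R : {pred rat}) (M : zmodType) (act : rat -> M -> M) :=
  [/\ forall x, act 1 x = x,
      forall r x y, r \in R -> act r (x + y) = act r x + act r y,
      forall r s x, r \in R -> s \in R -> act (r + s) x = act r x + act s x
    & forall r s x, r \in R -> s \in R -> act (r * s) x = act r (act s x)].

Definition torsion_free (M : zmodType) := forall (n : nat) (x : M), x *+ n.+1 = 0 -> x = 0.

Definition module_over (S : {pred rat}) (M : zmodType) :=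
  exists act : rat -> M -> M, is_rmod S act.

Definition nucleus_is (R : {pred rat}) (M : zmodType) :=
  [/\ exists x : M, x != 0, module_over R M &
      forall S : {pred rat}, subring_closed S -> module_over S M -> {subset S <= R}].

(* Ext(A,B) = 0 (over Z): every extension 0 -> B -> E -> A -> 0 of abelian
   groups splits. *)
Definition Ext_zero (A B : zmodType) :=
  forall (E : zmodType) (i : B -> E) (q : E -> A),
    (forall x y, i (x + y) = i x + i y) ->
    (forall x y, q (x + y) = q x + q y) ->
    injective i -> (forall a, exists e, q e = a) ->
    (forall e, q e = 0 <-> exists b, e = i b) ->
    exists s : A -> E, (forall x y, s (x + y) = s x + s y) /\ (forall a, q (s a) = a).

Definition splitter (G : zmodType) := Ext_zero G G.

Definition is_submod (R : {pred rat}) (M : zmodType) (act : rat -> M -> M)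
    (S : M -> Prop) :=
  [/\ S 0, forall x y, S x -> S y -> S (x - y) & forall r x, r \in R -> S x -> S (act r x)].

Definition free_submod (R : {pred rat}) (M : zmodType) (act : rat -> M -> M)
    (S : M -> Prop) :=
  exists (J : eqType) (b : J -> M),
    [/\ forall j, S (b j),
        forall (s : seq J) (c : J -> rat), uniq s -> (forall j, c j \in R) ->
          \sum_(j <- s) act (c j) (b j) = 0 -> forall j, j \in s -> c j = 0
      & forall x, S x -> exists (s : seq J) (c : J -> rat),
          (forall j, c j \in R) /\ x = \sum_(j <- s) act (c j) (b j)].

Definition free_rmod (R : {pred rat}) (M : zmodType) (act : rat -> M -> M) :=
  free_submod R act (fun _ => True).

Definition rank_le (M : zmodType) (S : M -> Prop) (n : nat) :=
  forall v : 'I_n.+1 -> M, (forall j, S (v j)) ->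
    exists c : 'I_n.+1 -> int, (exists j, c j != 0) /\ \sum_(j < n.+1) v j *~ c j = 0.

(* Membership in N of the formal element  sum_i x_i a_i + sum_m y_m b_m  of B:
   it is an R-combination sum_m c_m (y_{m+1} p_m - y_m - sum_i x_i k_im). *)
Definition in_relations (R : {pred rat}) (n : nat) (p : nat -> rat)
    (k : 'I_n -> nat -> rat) (a : 'I_n -> rat) (b : nat -> rat) :=
  exists (M' : nat) (c : nat -> rat),
    [/\ forall m, c m \in R, forall m, (M' <= m)%N -> c m = 0,
        forall i, a i = - \sum_(m < M') c m * k i m
      & forall m, b m = (if m is m'.+1 then c m' * p m' else 0) - c m].

(* H is isomorphic to B/N via x_i |-> x i, y_m |-> y m *)
Definition presented_by (R : {pred rat}) (H : zmodType) (act : rat -> H -> H)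
    (n : nat) (p : nat -> rat) (k : 'I_n -> nat -> rat) :=
  exists (x : 'I_n -> H) (y : nat -> H),
    (forall h : H, exists (a : 'I_n -> rat) (b : nat -> rat) (M : nat),
        (forall i, a i \in R) /\ (forall m, b m \in R) /\
        h = \sum_(i < n) act (a i) (x i) + \sum_(m < M) act (b m) (y m)) /\
    (forall (a : 'I_n -> rat) (b : nat -> rat) (M : nat),
        (forall i, a i \in R) -> (forall m, b m \in R) ->
        (forall m, (M <= m)%N -> b m = 0) ->
        (\sum_(i < n) act (a i) (x i) + \sum_(m < M) act (b m) (y m) = 0
          <-> in_relations R p k a b)).

Definition n_free_by_1 (R : {pred rat}) (n : nat) (H : zmodType) (act : rat -> H -> H) :=
  [/\ exists (p : nat -> rat) (k : 'I_n -> nat -> rat),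
        [/\ forall m, p m \in R, forall m, p m != 0,
            forall i m, k i m \in R & presented_by R act p k],
      ~ free_rmod R act
    & forall S : H -> Prop, is_submod R act S -> rank_le S n -> free_submod R act S].

Definition fin_rank_free_by_1 (R : {pred rat}) (H : zmodType) (act : rat -> H -> H) :=
  exists n : nat, n_free_by_1 R n act.

Definition modclass := forall H : zmodType, (rat -> H -> H) -> Prop.

Definition Phi_complete (Phi : modclass) (G : zmodType) :=
  forall (H : zmodType) (actH : rat -> H -> H), Phi H actH -> Ext_zero H G.

Definition quotient_iso (R : {pred rat}) (G : zmodType) (actG : rat -> G -> G)
    (Ga Gb : G -> Prop) (H : zmodType) (actH : rat -> H -> H) :=
  exists f : G -> H,
    [/\ forall x y, Gb x -> Gb y -> f (x + y) = f x + f y,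
        forall r x, r \in R -> Gb x -> f (actG r x) = actH r (f x),
        forall h, exists x, Gb x /\ f x = h
      & forall x, Gb x -> (f x = 0 <-> Ga x)].

(* Phi-represented: an ascending continuous chain (G_alpha)_{alpha < lambda}
   of submodules, indexed by a well-ordered set (I, lt), with G_0 = 0,
   union G, and successive quotients isomorphic to a member of Phi or free. *)
Definition Phi_represented (R : {pred rat}) (Phi : modclass) (G : zmodType)
    (actG : rat -> G -> G) :=
  exists (I : Type) (lt : I -> I -> Prop) (C : I -> G -> Prop),
    [/\ well_founded lt /\ (forall a b c, lt a b -> lt b c -> lt a c) /\
          (forall a b, lt a b \/ a = b \/ lt b a),
        (forall a, is_submod R actG (C a)) /\
        (forall a b x, lt a b -> C a x -> C b x),
        forall a, (forall b, ~ lt b a) -> forall x, C a x -> x = 0,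
        (* continuity at limits *)
        (forall a, (exists b, lt b a) -> (forall b, lt b a -> exists c, lt b c /\ lt c a) ->
          forall x, C a x -> exists b, lt b a /\ C b x) /\
        (forall x, exists a, C a x)
      & (* b = a + 1 *)
        forall a b, lt a b -> (forall c, lt a c -> ~ lt c b) ->
          exists (H : zmodType) (actH : rat -> H -> H),
            (Phi H actH \/ (is_rmod R actH /\ free_rmod R actH)) /\
            quotient_iso R actG (C a) (C b) actH].

(* Eklof's lemma.  A section of an extension q : E -> G of G by G is built along the
   filtration (G_a).  At a successor step the factor G_(a+1)/G_a lies in Phi or is a free
   R-module, and in both cases Ext(G_(a+1)/G_a, G) = 0: for Phi by completeness, for a free
   factor because G, a torsion-free R-module, is uniquely divisible by the denominators of R.
   This vanishing extends a section over G_a to G_(a+1): the defect of a naive extension is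
   a 2-cocycle on the factor, hence a coboundary.  At limits the sections glue by continuity. *)

From HB Require Import structures.
From mathcomp Require Import all_boot all_order all_algebra ring.
From Stdlib Require Import Classical ClassicalEpsilon FunctionalExtensionality.
Set Implicit Arguments. Unset Strict Implicit. Unset Printing Implicit Defensive.
Import GRing.Theory Num.Theory.
Local Open Scope ring_scope.

Definition subgroup (A : zmodType) (P : A -> Prop) :=
  P 0 /\ forall x y, P x -> P y -> P (x - y).

Definition additive_on (A B : zmodType) (P : A -> Prop) (f : A -> B) :=
  forall x y, P x -> P y -> f (x + y) = f x + f y.

Definition section_on (A E : zmodType) (q : E -> A) (P : A -> Prop) (s : A -> E) :=
  additive_on P s /\ forall x, P x -> q (s x) = x.

Section Subgroup.
Variables (A B : zmodType) (P : A -> Prop).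
Hypothesis P_subgroup : subgroup P.

Lemma subgroup0 : P 0. Proof. by case: P_subgroup. Qed.

Lemma subgroupB x y : P x -> P y -> P (x - y).
Proof. by case: P_subgroup => _; apply. Qed.

Lemma subgroupN x : P x -> P (- x).
Proof. by move=> Px; rewrite -sub0r; apply: subgroupB (subgroup0) Px. Qed.

Lemma subgroupD x y : P x -> P y -> P (x + y).
Proof. by move=> Px Py; rewrite -[y]opprK; apply: subgroupB Px (subgroupN Py). Qed.

Variable f : A -> B.
Hypothesis fD : additive_on P f.

Lemma additive_on0 : f 0 = 0.
Proof.
have P0 := subgroup0.
by apply: (addrI (f 0)); rewrite -fD // !addr0.
Qed.

Lemma additive_onB x y : P x -> P y -> f (x - y) = f x - f y.
Proof.
by move=> Px Py; apply/eqP; rewrite eq_sym subr_eq -fD ?subrK //; apply: subgroupB.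
Qed.

Lemma additive_onN x : P x -> f (- x) = - f x.
Proof.
by move=> Px; rewrite -[- x]sub0r additive_onB ?additive_on0 ?sub0r //; apply: subgroup0.
Qed.

End Subgroup.

Lemma subgroupT (A : zmodType) : subgroup (fun _ : A => True).
Proof. by []. Qed.

Section Additive.
Variables (A B : zmodType) (f : A -> B).
Hypothesis fD : {morph f : x y / x + y}.

Lemma addfB : {morph f : x y / x - y}.
Proof. by move=> x y; apply: (additive_onB (@subgroupT A)) => // ? ? _ _; apply: fD. Qed.

HB.instance Definition _ := GRing.isZmodMorphism.Build A B f addfB.

Lemma addf0 : f 0 = 0. Proof. exact: raddf0. Qed.

Lemma addfMz x (n : int) : f (x *~ n) = f x *~ n. Proof. exact: raddfMz. Qed.

End Additive.

Lemma torsion_free_mulz (M : zmodType) (x : M) (k : int) :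
  torsion_free M -> k != 0 -> x *~ k = 0 -> x = 0.
Proof.
move=> tf; case: k => [[|n] | n] //= _; first by rewrite -pmulrn; apply: tf.
by rewrite NegzE mulrNz -pmulrn => /eqP; rewrite oppr_eq0 => /eqP /tf.
Qed.

Section SubringOfRat.
Variable R : {pred rat}.
Hypothesis R_subring : subring_closed R.
HB.instance Definition _ := GRing.isSubringClosed.Build rat R R_subring.

Lemma subring_subgroup : subgroup (fun r : rat => r \in R).
Proof. by split=> [|r s Rr Rs]; rewrite ?rpred0 ?rpredB. Qed.

Lemma subring_invden r : r \in R -> ((denq r)%:~R)^-1 \in R.
Proof.
move=> Rr; have [u [v uv]] := Bezoutz (numq r) (denq r).
have d0 : (denq r)%:~R != 0 :> rat by rewrite intr_eq0 denq_neq0.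
suff -> : ((denq r)%:~R)^-1 = u%:~R * r + v%:~R by rewrite rpredD ?rpredM ?rpred_int.
have uv1 : u%:~R * (r * (denq r)%:~R) + v%:~R * (denq r)%:~R = 1 :> rat.
  by rewrite -numqE -!intrM -intrD uv /gcdz (eqP (coprime_num_den r)).
apply: (mulfI d0); rewrite mulfV // -[LHS]uv1 [RHS]mulrDr [in RHS]mulrCA.
by rewrite [r * _]mulrC [v%:~R * _]mulrC.
Qed.

Section ScalarAction.
Variables (M : zmodType) (act : rat -> M -> M).
Hypothesis act_rmod : is_rmod R act.

Lemma act_additive x : additive_on (fun r => r \in R) (act ^~ x).
Proof. by case: act_rmod => _ _ actD _ r s; apply: actD. Qed.

Lemma act0 x : act 0 x = 0.
Proof. exact: (additive_on0 subring_subgroup (act_additive x)). Qed.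

Lemma actN r x : r \in R -> act (- r) x = - act r x.
Proof. exact: (additive_onN subring_subgroup (act_additive x)). Qed.

Lemma act_int x (z : int) : act z%:~R x = x *~ z.
Proof.
have [act1 _ actD _] := act_rmod.
have act_nat n : act n%:R x = x *+ n.
  elim: n => [|n IHn]; first by rewrite act0.
  by rewrite -natr1 actD ?rpred_nat ?rpred1 // IHn act1 mulrSr.
by case: z => n; rewrite ?NegzE ?mulrNz ?actN ?rpred_nat // act_nat.
Qed.

Lemma act_invden r x : r \in R -> act ((denq r)%:~R)^-1 x *~ denq r = x.
Proof.
have [act1 _ _ actM] := act_rmod.
move=> Rr; rewrite -act_int -actM ?rpred_int ?subring_invden // mulfV ?act1 //.
by rewrite intr_eq0 denq_neq0.
Qed.

End ScalarAction.

Lemma big_pairs_regroup (J : eqType) (V : zmodType) (phi : J -> rat -> V)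
    (phiD : forall j, additive_on (fun r => r \in R) (phi j))
    (L : seq (J * rat)) : all (fun p => p.2 \in R) L ->
  \sum_(p <- L) phi p.1 p.2 =
  \sum_(j <- undup (map fst L)) phi j (\sum_(p <- L | p.1 == j) p.2).
Proof.
move=> /allP LR.
have phi0 j : phi j 0 = 0 := additive_on0 subring_subgroup (phiD j).
transitivity (\sum_(j <- undup (map fst L)) \sum_(p <- L | p.1 == j) phi p.1 p.2); last first.
  apply: eq_bigr => j _; rewrite [in RHS]big_seq_cond.
  rewrite (@big_morph_in V rat R (phi j) 0 +%R 0 +%R) ?rpred0 //; last 2 first.
  - by move=> r s Rr Rs; apply: phiD.
  - by move=> p /andP [pL _]; apply: LR.
  - by rewrite [LHS]big_seq_cond; apply: eq_bigr => p /andP [_ /eqP ->].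
  - by move=> r s Rr Rs; rewrite rpredD.
rewrite (eq_bigr (fun j => \sum_(p <- L) (if p.1 == j then phi p.1 p.2 else 0)));
  last by move=> j _; rewrite big_mkcond.
rewrite exchange_big /=; apply: eq_big_seq => p pL.
rewrite (bigD1_seq p.1) ?undup_uniq ?mem_undup ?map_f //= eqxx big1 ?addr0 //.
by move=> j /negbTE; rewrite eq_sym => ->.
Qed.

Lemma big_pairs_opp (J : eqType) (V : zmodType) (phi : J -> rat -> V)
    (phiD : forall j, additive_on (fun r => r \in R) (phi j))
    (L : seq (J * rat)) : all (fun p => p.2 \in R) L ->
  \sum_(p <- [seq (p.1, - p.2) | p <- L]) phi p.1 p.2 = - \sum_(p <- L) phi p.1 p.2.
Proof.
move=> /allP LR; rewrite big_map -sumrN big_seq [RHS]big_seq.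
by apply: eq_bigr => p /LR Rp; apply: (additive_onN subring_subgroup (phiD p.1)).
Qed.

Section FreeModule.
Variables (H : zmodType) (act : rat -> H -> H) (J : eqType) (b : J -> H).
Hypothesis act_rmod : is_rmod R act.
Hypothesis b_indep : forall (s : seq J) (c : J -> rat), uniq s -> (forall j, c j \in R) ->
  \sum_(j <- s) act (c j) (b j) = 0 -> forall j, j \in s -> c j = 0.
Hypothesis b_span : forall x, exists (s : seq J) (c : J -> rat),
  (forall j, c j \in R) /\ x = \sum_(j <- s) act (c j) (b j).

Definition combination (L : seq (J * rat)) := \sum_(p <- L) act p.2 (b p.1).

Definition R_coefs (L : seq (J * rat)) := all (fun p => p.2 \in R) L.

Definition opp_coefs (L : seq (J * rat)) := [seq (p.1, - p.2) | p <- L].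

Lemma R_coefs_opp L : R_coefs L -> R_coefs (opp_coefs L).
Proof. by move=> /allP LR; apply/allP => _ /mapP [p pL ->] /=; rewrite rpredN LR. Qed.

Lemma combination_onto x : exists L, R_coefs L /\ x = combination L.
Proof.
have [s [c [cR ->]]] := b_span x.
exists [seq (j, c j) | j <- s]; split; last by rewrite /combination big_map.
by apply/allP => _ /mapP [j _ ->]; apply: cR.
Qed.

Variables (V : zmodType) (phi : J -> rat -> V).
Hypothesis phiD : forall j, additive_on (fun r => r \in R) (phi j).

Definition phi_sum (L : seq (J * rat)) := \sum_(p <- L) phi p.1 p.2.

Lemma combination_eq0 L : R_coefs L -> combination L = 0 -> phi_sum L = 0.
Proof.
move=> LR L0; have coefR j : \sum_(p <- L | p.1 == j) p.2 \in R.
  by rewrite big_seq_cond rpred_sum // => p /andP [/(allP LR)].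
rewrite /combination (big_pairs_regroup (fun j => act_additive act_rmod (b j)) LR) in L0.
have c0 := b_indep (undup_uniq _) (fun j => coefR j) L0.
rewrite /phi_sum (big_pairs_regroup phiD LR) big1_seq // => j /andP [_ jL].
by rewrite c0 // (additive_on0 subring_subgroup (phiD j)).
Qed.

Lemma phi_sum_congr L1 L2 : R_coefs L1 -> R_coefs L2 ->
  combination L1 = combination L2 -> phi_sum L1 = phi_sum L2.
Proof.
move=> L1R L2R L12; apply/eqP; rewrite -subr_eq0; apply/eqP.
have LR : R_coefs (L1 ++ opp_coefs L2).
  by rewrite /R_coefs all_cat; apply/andP; split; [exact: L1R | exact: R_coefs_opp].
have comb0 : combination (L1 ++ opp_coefs L2) = 0.
  rewrite /combination big_cat (big_pairs_opp (fun j => act_additive act_rmod (b j))) //=.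
  by rewrite -/(combination L1) -/(combination L2) L12 subrr.
by have := combination_eq0 LR comb0; rewrite /phi_sum big_cat (big_pairs_opp phiD).
Qed.

Lemma free_additive_ext : exists Psi : H -> V,
  {morph Psi : x y / x + y} /\ forall L, R_coefs L -> Psi (combination L) = phi_sum L.
Proof.
have /choice [rep repP] := combination_onto.
exists (fun x => phi_sum (rep x)); split=> [x y | L LR]; last first.
  by have [RL EL] := repP (combination L); apply: phi_sum_congr.
have [Rx Ex] := repP x; have [Ry Ey] := repP y; have [Rxy Exy] := repP (x + y).
have Rcat : R_coefs (rep x ++ rep y) by rewrite /R_coefs all_cat; apply/andP.
rewrite -[RHS]big_cat /= -/(phi_sum _); apply: phi_sum_congr => //.
by rewrite -Exy /combination big_cat -/(combination (rep x)) -/(combination (rep y)) -Ex -Ey.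
Qed.

End FreeModule.

End SubringOfRat.

Record cocycle (B H : zmodType) := Cocycle {
  cocycle_fun :> H -> H -> B;
  cocycle0 : forall h, cocycle_fun 0 h = 0;
  cocycleC : forall h k, cocycle_fun h k = cocycle_fun k h;
  cocycleA : forall h k l,
    cocycle_fun h k + cocycle_fun (h + k) l = cocycle_fun k l + cocycle_fun h (k + l) }.

Section Twist.
Variables (B H : zmodType) (c : cocycle B H).

(* The extension of H by B classified by c. *)
Definition twist : Type := (B * H)%type.
HB.instance Definition _ := Choice.copy twist (B * H)%type.

Definition twist_add (x y : twist) : twist := (x.1 + y.1 + c x.2 y.2, x.2 + y.2).
Definition twist_opp (x : twist) : twist := (- x.1 - c x.2 (- x.2), - x.2).
Definition twist_zero : twist := (0, 0).

Lemma twist_addA : associative twist_add.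
Proof.
move=> [x1 x2] [y1 y2] [z1 z2]; rewrite /twist_add /=; congr (_, _); last exact: addrA.
by rewrite (addrAC _ _ z1) -!addrA cocycleA !addrA.
Qed.

Lemma twist_addC : commutative twist_add.
Proof. by move=> [x1 x2] [y1 y2]; rewrite /twist_add /= cocycleC [x1 + _]addrC [x2 + _]addrC. Qed.

Lemma twist_add0 : left_id twist_zero twist_add.
Proof. by move=> [x1 x2]; rewrite /twist_add /= cocycle0 !add0r addr0. Qed.

Lemma twist_addN : left_inverse twist_zero twist_opp twist_add.
Proof.
move=> [x1 x2]; rewrite /twist_add /twist_zero /=; congr (_, _); last exact: addNr.
by rewrite [c (- x2) x2]cocycleC addrAC subrK addNr.
Qed.

HB.instance Definition _ :=
  GRing.isZmodule.Build twist twist_addA twist_addC twist_add0 twist_addN.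

Lemma twist_addE (x y : twist) : x + y = (x.1 + y.1 + c x.2 y.2, x.2 + y.2).
Proof. by []. Qed.

Lemma coboundary_of_Ext_zero :
  Ext_zero H B -> exists g : H -> B, forall h k, g (h + k) = g h + g k + c h k.
Proof.
move=> HB; have [|||||s [sD sK]] := HB twist (fun b => (b, 0)) snd.
- by move=> b b'; rewrite twist_addE /= cocycle0 addr0 add0r.
- by [].
- by move=> b b' [].
- by move=> h; exists (0, h).
- by move=> [b h] /=; split=> [-> | [b' [_ ->]]] //; exists b.
by exists (fun h => (s h).1) => h k; rewrite sD twist_addE /= !sK.
Qed.

End Twist.

Section Extension.
Variables (A B E : zmodType) (i : B -> E) (q : E -> A).
Hypotheses (iD : {morph i : x y / x + y}) (qD : {morph q : x y / x + y}).
Hypotheses (i_inj : injective i) (q_onto : forall a, exists e, q e = a)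
  (ker_q : forall e, q e = 0 <-> exists b, e = i b).

Lemma q_i b : q (i b) = 0.
Proof. by apply/ker_q; exists b. Qed.

Lemma fiber_mulz_inj : torsion_free B -> forall (y y' : E) (k : int),
  k != 0 -> q y = q y' -> y *~ k = y' *~ k -> y = y'.
Proof.
move=> B_tf y y' k k0 qyy' yk.
have [g yg] : exists g, y - y' = i g by apply/ker_q; rewrite (addfB qD) qyy' subrr.
suff g0 : g = 0 by apply/eqP; rewrite -subr_eq0 yg g0 (addf0 iD).
apply: (torsion_free_mulz B_tf k0); apply: i_inj.
by rewrite (addfMz iD) -yg mulrzBl yk subrr (addf0 iD).
Qed.

Section ExtendSection.
Variables (H : zmodType) (Ga Gb : A -> Prop) (f : A -> H) (sa : A -> E).
Hypotheses (Ga_sub : subgroup Ga) (Gb_sub : subgroup Gb) (GaGb : forall x, Ga x -> Gb x).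
Hypotheses (fD : additive_on Gb f) (f_onto : forall h, exists x, Gb x /\ f x = h)
  (ker_f : forall x, Gb x -> f x = 0 <-> Ga x).
Hypothesis sa_section : section_on q Ga sa.

Lemma exists_normalized_lift :
  exists l : H -> E, [/\ forall h, Gb (q (l h)), forall h, f (q (l h)) = h & l 0 = 0].
Proof.
have f0 : f 0 = 0 := additive_on0 Gb_sub fD.
have /choice [l lP] :
    forall h, exists e, [/\ Gb (q e), f (q e) = h & h = 0 -> e = 0].
  move=> h; have [->|h0] := eqVneq h 0.
    by exists 0; rewrite (addf0 qD); split=> //; exact: subgroup0.
  have [x [Gbx fx]] := f_onto h; have [e qe] := q_onto x.
  by exists e; rewrite qe; split=> // h_0; rewrite h_0 eqxx in h0.
by exists l; split=> [h|h|]; [case: (lP h) | case: (lP h) | case: (lP 0) => _ _; apply].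
Qed.

(* For a lift l of f, [lift_section] is a set-theoretic section of q over Gb extending sa,
   whose failure of additivity is [corrected_defect], an i(B)-valued 2-cocycle on H. *)
Section Lift.
Variable l : H -> E.
Hypotheses (l_in : forall h, Gb (q (l h))) (fl : forall h, f (q (l h)) = h) (l0 : l 0 = 0).

Definition lift_defect h k := l (h + k) - l h - l k.

Definition corrected_defect h k := lift_defect h k - sa (q (lift_defect h k)).

Lemma q_lift_defect_in h k : Ga (q (lift_defect h k)).
Proof.
have inGb : Gb (q (lift_defect h k)).
  rewrite /lift_defect !(addfB qD).
  by do 2!apply: (subgroupB Gb_sub) (l_in _); apply: l_in.
apply/ker_f => //; rewrite /lift_defect !(addfB qD).
rewrite !(additive_onB Gb_sub fD) ?fl ?[h + k]addrC ?addrK ?subrr //.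
exact: (subgroupB Gb_sub).
Qed.

Lemma lift_defectE h k : l (h + k) = l h + l k + lift_defect h k.
Proof. by rewrite /lift_defect [RHS]addrC addrA (addrAC _ (- l k)) !subrK. Qed.

Lemma lift_defectC h k : lift_defect h k = lift_defect k h.
Proof. by rewrite /lift_defect [h + k]addrC (addrAC (l _)). Qed.

Lemma lift_defect_assocl h k m :
  lift_defect h k + lift_defect (h + k) m = l (h + k + m) - l h - l k - l m.
Proof.
by rewrite addrC /lift_defect -!addrA; congr (_ + _); rewrite addrCA addKr addrC -addrA.
Qed.

Lemma lift_defect_assocr h k m :
  lift_defect k m + lift_defect h (k + m) = l (h + k + m) - l h - l k - l m.
Proof. by rewrite addrC /lift_defect [h + (k + m)]addrA -!addrA addKr. Qed.

Lemma corrected_defect_ker h k : q (corrected_defect h k) = 0.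
Proof. by rewrite /corrected_defect (addfB qD) sa_section.2 ?subrr //; apply: q_lift_defect_in. Qed.

Lemma corrected_defectD h k h' k' :
  corrected_defect h k + corrected_defect h' k' =
  (lift_defect h k + lift_defect h' k') - sa (q (lift_defect h k + lift_defect h' k')).
Proof.
rewrite /corrected_defect qD sa_section.1 ?opprD 1?addrACA //; exact: q_lift_defect_in.
Qed.

Lemma defect_cocycle : exists c : cocycle B H, forall h k, corrected_defect h k = i (c h k).
Proof.
have /choice [c cP] : forall hk : H * H, exists b, corrected_defect hk.1 hk.2 = i b.
  by move=> [h k]; apply/ker_q/corrected_defect_ker.
have c0 h : c (0, h) = 0.
  apply: i_inj; rewrite -cP (addf0 iD) /corrected_defect /lift_defect add0r l0 subr0 subrr.
  by rewrite (addf0 qD) (additive_on0 Ga_sub sa_section.1) subrr.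
have cC h k : c (h, k) = c (k, h).
  by apply: i_inj; rewrite -!cP /corrected_defect lift_defectC.
have cA h k m : c (h, k) + c (h + k, m) = c (k, m) + c (h, k + m).
  by apply: i_inj; rewrite !iD -!cP !corrected_defectD lift_defect_assocl lift_defect_assocr.
by exists (@Cocycle _ _ (fun h k => c (h, k)) c0 cC cA) => h k; exact: (cP (h, k)).
Qed.

Definition lift_section x := l (f x) + sa (x - q (l (f x))).

Lemma sub_lift_in x : Gb x -> Ga (x - q (l (f x))).
Proof.
by move=> Gbx; apply/ker_f; rewrite ?(additive_onB Gb_sub fD) ?fl ?subrr //; apply: subgroupB.
Qed.

Lemma lift_sectionK x : Gb x -> q (lift_section x) = x.
Proof.
by move=> Gbx; rewrite qD sa_section.2; [rewrite addrC subrK | apply: sub_lift_in].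
Qed.

Lemma lift_section_id x : Ga x -> lift_section x = sa x.
Proof.
move=> Gax; rewrite /lift_section (proj2 (ker_f (GaGb Gax)) Gax) l0 (addf0 qD).
by rewrite add0r subr0.
Qed.

Lemma lift_sectionD x y : Gb x -> Gb y ->
  lift_section (x + y) = lift_section x + lift_section y + corrected_defect (f x) (f y).
Proof.
move=> Gbx Gby; rewrite /lift_section fD //; set h := f x; set k := f y.
have Gau := sub_lift_in Gbx; have Gav := sub_lift_in Gby.
have -> : x + y - q (l (h + k)) = (x - q (l h)) + (y - q (l k)) - q (lift_defect h k).
  rewrite /lift_defect !(addfB qD) addrACA -opprD -[_ - q (l h) - _]addrA -opprD opprB.
  by rewrite addrA subrK.
move: Gau Gav; set u := x - q (l h); set v := y - q (l k) => Gau Gav.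
rewrite (additive_onB Ga_sub sa_section.1); last exact: q_lift_defect_in.
  rewrite sa_section.1 // (lift_defectE h k) /corrected_defect.
  by rewrite [in RHS](addrACA (l h) (sa u)) [RHS]addrACA.
exact: subgroupD.
Qed.

End Lift.

Lemma extend_section : Ext_zero H B ->
  exists sb, section_on q Gb sb /\ forall x, Ga x -> sb x = sa x.
Proof.
move=> HExt; have [l [l_in fl l0]] := exists_normalized_lift.
have [c cP] := defect_cocycle l_in fl l0.
have [g gD] := coboundary_of_Ext_zero c HExt.
have g0 : g 0 = 0.
  by have := gD 0 0; rewrite cocycle0 !addr0 => /esym/eqP; rewrite -subr_eq0 addrK => /eqP.
exists (fun x => lift_section l x - i (g (f x))); split; first split.
- move=> x y Gbx Gby; rewrite lift_sectionD // fD // gD !iD cP.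
  by rewrite [i (g _) + _ + _]addrC addrKA opprD addrACA.
- by move=> x Gbx; rewrite (addfB qD) q_i subr0 lift_sectionK.
- by move=> x Gax; rewrite lift_section_id // (proj2 (ker_f (GaGb Gax)) Gax) g0 (addf0 iD) subr0.
Qed.

End ExtendSection.

Section FreeExtension.
Variable R : {pred rat}.
Hypothesis R_subring : subring_closed R.
HB.instance Definition _ := GRing.isSubringClosed.Build rat R R_subring.
Variables (actA : rat -> A -> A) (actB : rat -> B -> B).
Hypotheses (actA_rmod : is_rmod R actA) (actB_rmod : is_rmod R actB) (B_tf : torsion_free B).

(* y stands for r e, which E, not being an R-module, lacks; such y exist since B is an
   R-module and are unique since B is torsion-free. *)
Definition frac_multiple (e : E) (r : rat) (y : E) := y *~ denq r = e *~ numq r.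

Lemma frac_multiple_exists e r : r \in R ->
  exists y, frac_multiple e r y /\ q y = actA r (q e).
Proof.
move=> Rr; have [_ _ _ actAM] := actA_rmod; have [y0 qy0] := q_onto (actA r (q e)).
have [g yg] : exists g, y0 *~ denq r - e *~ numq r = i g.
  apply/ker_q; rewrite (addfB qD) !(addfMz qD) qy0 -!(act_int R_subring actA_rmod).
  by rewrite -actAM ?rpred_int // mulrC -numqE subrr.
exists (y0 - i (actB ((denq r)%:~R)^-1 g)); split; last by rewrite (addfB qD) q_i subr0.
by rewrite /frac_multiple mulrzBl -(addfMz iD) (act_invden R_subring actB_rmod _ Rr) -yg
  opprB addrC subrK.
Qed.

Lemma frac_multipleD e r s y y' z :
  frac_multiple e r y -> frac_multiple e s y' -> frac_multiple e (r + s) z ->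
  q z = q (y + y') -> z = y + y'.
Proof.
move=> yr ys zrs qz; pose K := denq r * denq s * denq (r + s).
have mulz_den t x m : frac_multiple e t x -> x *~ (denq t * m) = e *~ (numq t * m).
  by move=> xt; rewrite !mulrzA xt.
apply: (fiber_mulz_inj B_tf (k := K)) => //; first by rewrite !mulf_neq0 ?denq_neq0.
have -> : z *~ K = e *~ (numq (r + s) * (denq r * denq s)) by rewrite /K mulrC mulz_den.
rewrite mulrzDl.
have -> : y *~ K = e *~ (numq r * (denq s * denq (r + s))) by rewrite /K -mulrA mulz_den.
have -> : y' *~ K = e *~ (numq s * (denq r * denq (r + s))).
  by rewrite /K mulrAC mulrC mulz_den.
rewrite -mulrzDr; congr (_ *~ _); apply: (@intr_inj rat); rewrite !(intrD, intrM) !numqE.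
by move: (denq r)%:~R (denq s)%:~R (denq (r + s))%:~R => dr ds drs; ring.
Qed.

Lemma lift_scalar_multiples a : exists u : rat -> E,
  additive_on (fun r => r \in R) u /\ forall r, r \in R -> q (u r) = actA r a.
Proof.
have [e <-] := q_onto a.
have /choice [u uP] : forall r, exists y,
    r \in R -> frac_multiple e r y /\ q y = actA r (q e).
  move=> r; have [Rr | _] := boolP (r \in R); last by exists 0.
  by have [y yP] := frac_multiple_exists e Rr; exists y.
exists u; split=> [r s Rr Rs | r Rr]; last by case: (uP r Rr).
have [ur qur] := uP r Rr; have [us qus] := uP s Rs; have [urs qurs] := uP _ (rpredD Rr Rs).
apply: (frac_multipleD ur us urs).
by rewrite qD qurs qur qus (act_additive actA_rmod).
Qed.

Hypothesis A_free : free_rmod R actA.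

Lemma free_section : exists s : A -> E, {morph s : x y / x + y} /\ forall a, q (s a) = a.
Proof.
have [J [b [_ b_indep b_span]]] := A_free.
have /choice [u uP] := fun j => lift_scalar_multiples (b j).
have [Psi [PsiD PsiE]] :=
  free_additive_ext R_subring actA_rmod b_indep (fun x => b_span x I) (fun j => (uP j).1).
exists Psi; split=> // a; have [L [LR ->]] := combination_onto (fun x => b_span x I) a.
rewrite PsiE // /phi_sum (big_morph q qD (addf0 qD)) /combination.
by rewrite big_seq [RHS]big_seq; apply: eq_bigr => p /(allP LR) Rp; apply: (uP _).2.
Qed.

End FreeExtension.

End Extension.

Lemma Ext_zero_free (R : {pred rat}) (A B : zmodType) (actA : rat -> A -> A)
    (actB : rat -> B -> B) : subring_closed R -> is_rmod R actA -> free_rmod R actA ->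
  is_rmod R actB -> torsion_free B -> Ext_zero A B.
Proof.
by move=> R_subring actA_rmod A_free actB_rmod B_tf E i q iD qD i_inj q_onto ker_q;
  apply: (free_section iD qD i_inj q_onto ker_q R_subring actA_rmod actB_rmod).
Qed.

Section Eklof.
Variables (A E : zmodType) (q : E -> A).
Hypothesis qD : {morph q : x y / x + y}.
Variables (I : Type) (lt : I -> I -> Prop) (C : I -> A -> Prop).
Hypotheses (lt_wf : well_founded lt) (lt_total : forall a b, lt a b \/ a = b \/ lt b a).
Hypothesis C_subgroup : forall a, subgroup (C a).
Hypothesis C_mono : forall a b x, lt a b -> C a x -> C b x.
Hypothesis C_min : forall a, (forall b, ~ lt b a) -> forall x, C a x -> x = 0.
Hypothesis C_cont : forall a, (exists b, lt b a) ->
  (forall b, lt b a -> exists c, lt b c /\ lt c a) -> forall x, C a x -> exists b, lt b a /\ C b x.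
Hypothesis C_cover : forall x, exists a, C a x.

Definition successor a b := lt a b /\ forall c, lt a c -> ~ lt c b.

Hypothesis C_extend : forall a b, successor a b -> forall sa, section_on q (C a) sa ->
  exists sb, section_on q (C b) sb /\ forall x, C a x -> sb x = sa x.

Definition extension a b (sa : A -> E) : A -> E :=
  epsilon (inhabits sa) (fun sb => section_on q (C b) sb /\ forall x, C a x -> sb x = sa x).

Lemma extensionP a b sa : successor a b -> section_on q (C a) sa ->
  section_on q (C b) (extension a b sa) /\ forall x, C a x -> extension a b sa x = sa x.
Proof. by move=> ab sa_sec; exact: (epsilon_spec (inhabits sa) _ (C_extend ab sa_sec)). Qed.

Definition coherent (P : I -> Prop) (s : I -> A -> E) :=
  forall a b, P a -> P b -> lt a b -> forall x, C a x -> s b x = s a x.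

Definition glue (P : I -> Prop) (s : I -> A -> E) (x : A) : E :=
  match excluded_middle_informative (exists a, P a /\ C a x) with
  | left ex => s (proj1_sig (constructive_indefinite_description _ ex)) x
  | right _ => 0
  end.

Lemma glueE P s a x : coherent P s -> P a -> C a x -> glue P s x = s a x.
Proof.
move=> s_coh Pa Cax; rewrite /glue.
case: excluded_middle_informative => [ex | []]; last by exists a.
case: constructive_indefinite_description => a' [Pa' Ca'x] /=.
by have [aa' | [<- | a'a]] := lt_total a a'; [apply: s_coh | | apply/esym/s_coh].
Qed.

Lemma glue_section P s (Q : A -> Prop) : coherent P s ->
  (forall a, P a -> section_on q (C a) (s a)) -> subgroup Q ->
  (forall x, Q x -> exists a, P a /\ C a x) -> section_on q Q (glue P s).
Proof.
move=> s_coh s_sec Q_sub Q_cover.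
have ub a1 a2 : P a1 -> P a2 ->
    exists m, [/\ P m, forall x, C a1 x -> C m x & forall x, C a2 x -> C m x].
  move=> P1 P2; have [a12 | [<- | a21]] := lt_total a1 a2.
  - by exists a2; split=> // x; apply: C_mono.
  - by exists a1.
  - by exists a1; split=> // x; apply: C_mono.
split=> [x y Qx Qy | x Qx].
- have [ax [Pax Cx]] := Q_cover x Qx; have [ay [Pay Cy]] := Q_cover y Qy.
  have [axy [Paxy Cxy]] := Q_cover (x + y) (subgroupD Q_sub Qx Qy).
  have [m1 [Pm1 xm1 ym1]] := ub _ _ Pax Pay.
  have [m [Pm m1m xym]] := ub _ _ Pm1 Paxy.
  have Cmx := m1m _ (xm1 _ Cx); have Cmy := m1m _ (ym1 _ Cy).
  by rewrite !(glueE (a := m)) //; [apply: (s_sec m Pm).1 | apply: xym].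
- have [a [Pa Cax]] := Q_cover x Qx.
  by rewrite (glueE (a := a)) //; apply: (s_sec a Pa).2.
Qed.

Definition tower_step b (s : I -> A -> E) : A -> E :=
  match excluded_middle_informative (exists a, successor a b) with
  | left ex => let a := proj1_sig (constructive_indefinite_description _ ex) in
               extension a b (s a)
  | right _ => glue (lt ^~ b) s
  end.

Lemma tower_step_ext b s s' :
  (forall a, lt a b -> s a = s' a) -> tower_step b s = tower_step b s'.
Proof.
move=> ss'; rewrite /tower_step; case: excluded_middle_informative => [ex | _].
  by case: constructive_indefinite_description => a [ab _] /=; rewrite ss'.
apply: functional_extensionality => x; rewrite /glue.
case: excluded_middle_informative => // ex.
by case: constructive_indefinite_description => a [ab _] /=; rewrite ss'.
Qed.

(* The match only turns the dependent recursive call into a plain family. *)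
Definition tower : I -> A -> E :=
  Fix lt_wf (fun _ => A -> E) (fun b rec => tower_step b (fun a =>
    match excluded_middle_informative (lt a b) with
    | left ab => rec a ab
    | right _ => fun _ => 0
    end)).

Lemma towerE b : tower b = tower_step b tower.
Proof.
rewrite /tower Fix_eq => [|b' f g fg]; apply: tower_step_ext => a ab;
  by case: excluded_middle_informative.
Qed.

Lemma successor_unique a a' b : successor a b -> successor a' b -> a = a'.
Proof.
move=> [ab a_next] [a'b a'_next]; have [aa' | [// | a'a]] := lt_total a a'.
- by case: (a_next _ aa' a'b).
- by case: (a'_next _ a'a ab).
Qed.

Lemma tower_succ a b : successor a b -> tower b = extension a b (tower a).
Proof.
move=> ab; rewrite towerE /tower_step.
case: excluded_middle_informative => [ex | []]; last by exists a.
by case: constructive_indefinite_description => a' a'b /=; rewrite (successor_unique ab a'b).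
Qed.

Lemma tower_limit b : ~ (exists a, successor a b) -> tower b = glue (lt ^~ b) tower.
Proof. by move=> nsucc; rewrite towerE /tower_step; case: excluded_middle_informative. Qed.

Definition tower_spec b := section_on q (C b) (tower b) /\
  forall a, lt a b -> forall x, C a x -> tower b x = tower a x.

Lemma tower_spec_succ a b :
  successor a b -> (forall c, lt c b -> tower_spec c) -> tower_spec b.
Proof.
move=> ab IH; have [a_sec a_coh] := IH a ab.1.
have [b_sec b_ext] := extensionP ab a_sec.
rewrite /tower_spec (tower_succ ab); split=> // a' a'b x Ca'x.
have [a'a | [a'_eq | aa']] := lt_total a' a.
- by rewrite b_ext; [apply: a_coh | exact: C_mono _ _ _ a'a Ca'x].
- by rewrite a'_eq in Ca'x *; apply: b_ext.
- by case: (ab.2 _ aa' a'b).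
Qed.

Lemma tower_spec_limit b :
  ~ (exists a, successor a b) -> (forall c, lt c b -> tower_spec c) -> tower_spec b.
Proof.
move=> nsucc IH; have coh : coherent (lt ^~ b) tower.
  by move=> a c _ cb ac x; apply: (IH c cb).2.
rewrite /tower_spec (tower_limit nsucc); split; last by move=> a ab x Cax; apply: glueE.
have [[a0 a0b] | nopred] := classic (exists a, lt a b).
  apply: glue_section => //; first by move=> a ab; exact: (IH a ab).1.
  apply: C_cont; first by exists a0.
  move=> a ab; apply: NNPP => nc; apply: nsucc; exists a; split=> // c ac cb.
  by apply: nc; exists c.
have b0 := @C_min b (fun a ab => nopred (ex_intro _ a ab)).
have glue0 : glue (lt ^~ b) tower 0 = 0.
  rewrite /glue; case: excluded_middle_informative => // ex.
  by case: nopred; have [a [ab _]] := ex; exists a.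
by split=> [x y /b0 -> /b0 -> | x /b0 ->]; rewrite ?addr0 glue0 ?addr0 ?(addf0 qD).
Qed.

Lemma tower_specP b : tower_spec b.
Proof.
elim/(well_founded_ind lt_wf): b => b IH.
have [[a ab] | nsucc] := classic (exists a, successor a b).
  exact: tower_spec_succ ab IH.
exact: tower_spec_limit nsucc IH.
Qed.

Lemma eklof_section : exists s, section_on q (fun _ => True) s.
Proof.
exists (glue (fun _ => True) tower); apply: glue_section => //.
- by move=> a c _ _ ac x; apply: (tower_specP c).2.
- by move=> a _; exact: (tower_specP a).1.
- by move=> x _; have [a Cax] := C_cover x; exists a.
Qed.

End Eklof.

Theorem corollary5p4 (R : {pred rat}) (Rsub : subring_closed R) (Phi : modclass)
  (HPhi : forall (H : zmodType) (actH : rat -> H -> H), Phi H actH ->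
            is_rmod R actH /\ fin_rank_free_by_1 R actH)
  (G : zmodType) (actG : rat -> G -> G) (HGmod : is_rmod R actG)
  (HGtf : torsion_free G) (HGnuc : nucleus_is R G)
  (HGc : Phi_complete Phi G) (HGr : Phi_represented R Phi actG) :
  splitter G.
Proof.
move=> E i q iD qD i_inj q_onto ker_q.
have [I [lt [C [[lt_wf [_ lt_total]] [C_sub C_mono] C_min [C_cont C_cover] C_succ]]]] := HGr.
have C_subgroup a : subgroup (C a) by have [] := C_sub a.
have C_extend a b : successor lt a b -> forall sa, section_on q (C a) sa ->
    exists sb, section_on q (C b) sb /\ forall x, C a x -> sb x = sa x.
  move=> [ab a_next] sa sa_sec.
  have [H [actH [H_kind [f [fD _ f_onto ker_f]]]]] := C_succ a b ab a_next.
  have H_Ext : Ext_zero H G.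
    case: H_kind => [/HGc // | [H_rmod H_free]].
    exact: Ext_zero_free Rsub H_rmod H_free HGmod HGtf.
  apply: (extend_section iD qD i_inj q_onto ker_q (C_subgroup a) (C_subgroup b) _ fD)
    f_onto ker_f sa_sec H_Ext => x; exact: C_mono.
have [s [sD sK]] :=
  eklof_section qD lt_wf lt_total C_subgroup C_mono C_min C_cont C_cover C_extend.
by exists s; split=> [x y | x]; [apply: sD | apply: sK].
Qed.
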